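(* Let $q$ be a positive integer, let $a$ be an integer invertible modulo $q$, and let $\mathbf{r}\in\mathbb{N}_0^{q-1}$. Then $|\mathscr{W}^{(q)}_{\mathbf{r}}|=|\mathscr{W}^{(q)}_{{}^a\mathbf{r}}|$.
   Context: A composition is a finite sequence $\delta=(\delta_1,\ldots,\delta_s)$ of positive integers, $\ell(\delta)=s$; partial sums $\delta^+_j=\sum_{i=1}^j\delta_i$. A composition $\delta$ is $q'$-cumulative if it is nonempty and $q\nmid\delta^+_j$ for all $1\leq j\leq\ell(\delta)$. For $\mathbf{r}=(r_1,\ldots,r_{q-1})\in\mathbb{N}_0^{q-1}$, let $\mu$ be the partition with exactly $r_i$ parts equal to $i$ for each $1\le i\le q-1$ and no other parts, and let $\mathscr{W}^{(q)}_{\mathbf{r}}$ be the set of $q'$-cumulative compositions that are rearrangements of $\mu$. For $a$ invertible modulo $q$, ${}^a\mathbf{r}=(r'_1,\ldots,r'_{q-1})$ where $r'_j=r_i$ whenever $j\equiv ai\pmod q$ ($1\le i,j\le q-1$). *)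

From mathcomp Require Import all_boot all_order all_algebra.
Set Implicit Arguments. Unset Strict Implicit. Unset Printing Implicit Defensive.
Import GRing.Theory Num.Theory.

(* r in N_0^{q-1} is a seq nat of size q-1; r_i (1 <= i <= q-1) is nth 0 r i.-1 *)
Definition rcomp (r : seq nat) (i : nat) : nat := nth 0 r i.-1.

Definition psum (d : seq nat) (j : nat) : nat := sumn (take j d).

Definition is_composition (d : seq nat) : bool := all (fun x => 0 < x) d.

Definition qcumulative (q : nat) (d : seq nat) : bool :=
  [&& is_composition d, d != [::] &
      all (fun j => ~~ (q %| psum d j)) (iota 1 (size d))].

Definition mu_of (q : nat) (r : seq nat) : seq nat :=
  flatten [seq nseq (rcomp r i) i | i <- iota 1 q.-1].

(* W^{(q)}_r : the q'-cumulative rearrangements of mu, as a duplicate-free list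
   (permutations s is the duplicate-free list of all rearrangements of s) *)
Definition Wset (q : nat) (r : seq nat) : seq (seq nat) :=
  [seq d <- permutations (mu_of q r) | qcumulative q d].

(* ^a r : r'_j = r_i whenever j = a i (mod q), 1 <= i, j <= q-1 *)
Definition arot (q : nat) (a : int) (r : seq nat) : seq nat :=
  [seq nth 0 r (find (fun i : nat => ((j%:Z)%R == (a * i%:Z)%R %[mod q%:Z])%Z)
                     (iota 1 q.-1))
  | j <- iota 1 q.-1].

From mathcomp Require Import all_boot all_order all_algebra.
From mathcomp Require Import zify.

(* Choose natural representatives c, c' of a and of its inverse modulo q.
   Then x |-> c x mod q permutes {1, ..., q-1} and multiplies every partial sum by c
   modulo q, so it preserves q-divisibility of partial sums. Applied letterwise it
   therefore maps W_r injectively into W_(^a r); the same map for c' gives the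
   reverse inequality. *)

Set Implicit Arguments.
Unset Strict Implicit.

Lemma mem_Wset q r d : (d \in Wset q r) = perm_eq d (mu_of q r) && qcumulative q d.
Proof. by rewrite mem_filter mem_permutations andbC. Qed.

Section MulMod.

Variables (q c c' : nat).
Hypothesis q_gt0 : 0 < q.
Hypothesis mul_cc' : (c * c') %% q = 1 %% q.

Definition mulmod (x : nat) : nat := (c * x) %% q.

Lemma mulmodK x : (c' * mulmod x) %% q = x %% q.
Proof.
by rewrite /mulmod modnMmr mulnA (mulnC c') -modnMml mul_cc' modnMml mul1n.
Qed.

Lemma mulmod_inj_mod x y : mulmod x = mulmod y -> x %% q = y %% q.
Proof. by move=> E; rewrite -mulmodK E mulmodK. Qed.

Lemma mulmod_range x : 0 < x < q -> 0 < mulmod x < q.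
Proof.
move=> /andP[x_gt0 x_ltq]; rewrite /mulmod ltn_pmod // andbT lt0n.
apply/negP => /eqP cx0; have := mulmodK x.
by rewrite /mulmod cx0 muln0 mod0n (modn_small x_ltq) => x0; rewrite -x0 in x_gt0.
Qed.

Lemma mulmod_inj x y : 0 < x < q -> 0 < y < q -> mulmod x = mulmod y -> x = y.
Proof.
move=> /andP[_ x_ltq] /andP[_ y_ltq] /mulmod_inj_mod.
by rewrite !modn_small.
Qed.

Lemma sumn_mulmod s : sumn (map mulmod s) %% q = (c * sumn s) %% q.
Proof.
elim: s => [|x s IHs] /=; first by rewrite muln0.
by rewrite -modnDmr IHs modnDmr /mulmod modnDml mulnDr.
Qed.

Lemma dvdn_sumn_mulmod s : (q %| sumn (map mulmod s)) = (q %| sumn s).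
Proof.
rewrite /dvdn sumn_mulmod; apply/eqP/eqP => [cs0|s0].
  by rewrite -mulmodK /mulmod cs0 muln0 mod0n.
by rewrite -modnMmr s0 muln0 mod0n.
Qed.

Lemma perm_mulmod_iota : perm_eq (map mulmod (iota 1 q.-1)) (iota 1 q.-1).
Proof.
have mulmod_uniq : uniq (map mulmod (iota 1 q.-1)).
  rewrite map_inj_in_uniq ?iota_uniq // => x y; rewrite !mem_iota => x_in y_in.
  by apply: mulmod_inj; lia.
apply: uniq_perm; rewrite ?iota_uniq //.
have [] := uniq_min_size mulmod_uniq (s2 := iota 1 q.-1); last by [].
- move=> y /mapP[x]; rewrite !mem_iota => x_in ->.
  have /mulmod_range : 0 < x < q by lia.
  lia.
- by rewrite size_map.
Qed.

Lemma mem_mu_of r x : x \in mu_of q r -> 0 < x < q.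
Proof.
case/flattenP=> s /mapP[i i_in ->]; rewrite mem_nseq => /andP[_ /eqP ->].
by move: i_in; rewrite mem_iota; lia.
Qed.

Variables r r' : seq nat.
Hypothesis rcomp_mulmod : forall i, 0 < i < q -> rcomp r' (mulmod i) = rcomp r i.

Lemma perm_mu_of_mulmod : perm_eq (map mulmod (mu_of q r)) (mu_of q r').
Proof.
rewrite /mu_of map_flatten -map_comp.
have -> : map (map mulmod \o (fun i => nseq (rcomp r i) i)) (iota 1 q.-1) =
          map (fun j => nseq (rcomp r' j) j) (map mulmod (iota 1 q.-1)).
  rewrite -map_comp; apply/eq_in_map => i; rewrite mem_iota => i_in /=.
  by rewrite map_nseq rcomp_mulmod //; lia.
exact/perm_flatten/perm_map/perm_mulmod_iota.
Qed.

Lemma qcumulative_mulmod d :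
  {in d, forall x, 0 < x < q} -> qcumulative q d -> qcumulative q (map mulmod d).
Proof.
move=> d_range /and3P[_ d_nil d_psum]; apply/and3P; split.
- by apply/allP => y /mapP[x x_in ->]; have := mulmod_range (d_range x x_in); lia.
- by case: (d) d_nil.
- apply/allP => j; rewrite size_map => j_in.
  by rewrite /psum -map_take dvdn_sumn_mulmod; apply: (allP d_psum).
Qed.

Lemma size_Wset_leq : size (Wset q r) <= size (Wset q r').
Proof.
have W_range d : d \in Wset q r -> {in d, forall x, 0 < x < q}.
  rewrite mem_Wset => /andP[d_perm _] x x_in.
  by apply: (@mem_mu_of r); rewrite -(perm_mem d_perm).
rewrite -(size_map (map mulmod)); apply: uniq_leq_size.
  rewrite map_inj_in_uniq ?filter_uniq ?permutations_uniq // => d1 d2 d1_in d2_in.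
  move/(congr1 (map (fun x => (c' * x) %% q))); rewrite -!map_comp.
  by rewrite !map_id_in // => x x_in /=; rewrite mulmodK modn_small //;
    [have := W_range _ d2_in x x_in | have := W_range _ d1_in x x_in]; lia.
move=> e /mapP[d d_in ->]; have d_range := W_range d d_in.
move: d_in; rewrite !mem_Wset => /andP[d_perm d_cum]; apply/andP; split.
  exact: perm_trans (perm_map _ d_perm) perm_mu_of_mulmod.
exact: qcumulative_mulmod.
Qed.

End MulMod.

Lemma find_pred1_iota m n i : m <= i < m + n -> find (pred1 i) (iota m n) = i - m.
Proof.
elim: n m => [|n IHn] m /=; first lia.
by case: eqP => [->|m_neq_i] i_in; rewrite ?subnn // IHn; lia.
Qed.

Lemma eqz_mod_mul_nat q (a : int) c j k : Posz c = (a %% q%:Z)%Z ->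
  ((j%:Z == a * k%:Z %[mod q%:Z])%Z) = (j %% q == (c * k) %% q).
Proof. by move=> ac; rewrite -modzMml -ac -PoszM !modz_nat eqz_nat. Qed.

Lemma rcomp_arot q (a : int) c c' r i : 0 < q -> Posz c = (a %% q%:Z)%Z ->
  (c * c') %% q = 1 %% q -> 0 < i < q -> rcomp (arot q a r) (mulmod q c i) = rcomp r i.
Proof.
move=> q_gt0 ac mul_cc' i_range; have ci_range := mulmod_range q_gt0 mul_cc' i_range.
rewrite /rcomp /arot (nth_map 0) ?size_iota; last lia.
rewrite nth_iota; last lia.
rewrite (@eq_in_find _ _ (pred1 i)).
  by rewrite find_pred1_iota; [congr nth; lia | lia].
move=> k; rewrite mem_iota => k_range /=.
rewrite (_ : 1 + _ = mulmod q c i); last lia.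
rewrite (eqz_mod_mul_nat _ _ ac) modn_mod.
apply/eqP/eqP => [ci_ck|->] //.
by symmetry; apply: (mulmod_inj mul_cc' i_range) ci_ck; lia.
Qed.

Lemma modz_unit_nat q (a b : int) : 0 < q -> ((a * b)%R == 1 %[mod q%:Z])%Z ->
  exists c c' : nat, Posz c = (a %% q%:Z)%Z /\ (c * c') %% q = 1 %% q.
Proof.
move=> q_gt0 ab1; have q_neq0 : (q%:Z != 0)%R by rewrite eqz_nat -lt0n.
have [c ac] : exists c : nat, Posz c = (a %% q%:Z)%Z.
  by move: (modz_ge0 a q_neq0); case: (a %% q%:Z)%Z => n //; exists n.
have [c' bc'] : exists c' : nat, Posz c' = (b %% q%:Z)%Z.
  by move: (modz_ge0 b q_neq0); case: (b %% q%:Z)%Z => n //; exists n.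
exists c, c'; split => //.
by apply/eqP; rewrite -eqz_nat -!modz_nat PoszM ac bc' modzMm.
Qed.

Theorem lemma2 (q : nat) (a : int) (r : seq nat) :
  0 < q ->
  (exists b : int, ((a * b)%R == 1 %[mod q%:Z])%Z) ->
  size r = q.-1 ->
  size (Wset q r) = size (Wset q (arot q a r)).
Proof.
move=> q_gt0 [b ab1] _.
have [c [c' [ac mul_cc']]] := modz_unit_nat q_gt0 ab1.
have mul_c'c : (c' * c) %% q = 1 %% q by rewrite mulnC.
apply/eqP; rewrite eqn_leq; apply/andP; split.
  apply: (size_Wset_leq q_gt0 mul_cc') => i i_range.
  exact: (rcomp_arot _ q_gt0 ac mul_cc').
apply: (size_Wset_leq q_gt0 mul_c'c) => i i_range.
have c'i_range := mulmod_range q_gt0 mul_c'c i_range.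
rewrite -(rcomp_arot _ q_gt0 ac mul_cc' c'i_range).
by rewrite [mulmod q c _](mulmodK mul_c'c) modn_small //; case/andP: i_range.
Qed.
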